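(* Let $A_{12}\in\mathbb{R}_{\ge 0}^{m\times n}$ with $\mathrm{rank}(A_{12})=m$, and let $A_{22}=[a_{ij}]\in\mathbb{R}^{n\times n}$ satisfy: $a_{ij}\ge 0$ for $i\neq j$, $a_{ii}\le 0$; the directed graph on $\{1,\dots,n\}$ with an edge $j\to i$ whenever $i\ne j$ and $a_{ij}>0$ is weakly connected; and, with $s_i=\sum_{j\neq i}(a_{ij}+a_{ji})$, one has $s_i\le 2|a_{ii}|$ for all $i$ and $s_j<2|a_{jj}|$ for at least one $j$. Let $Q\in\mathfrak{C}_{n,k}$ satisfy $\mathrm{rank}(A_{12}Q)=k$. For $\phi\in\mathbb{R}$ define $R_\phi=Q^+A_{22}\big(I_n-(I_n-\phi QQ^+)A_{12}^{\dagger}A_{12}\big)$ and $M_\phi=R_\phi Q$. Then there exists $\psi\in\mathbb{R}$ such that $M_\phi$ is Hurwitz for every $\phi>\psi$.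
   Context: $\mathfrak{C}_{n,k}=\{X\in\{0,1\}^{n\times k}: X\mathbf{1}_k=\mathbf{1}_n\}$, with every column of $Q$ nonzero; $Q^+=(Q^\top Q)^{-1}Q^\top$. $A_{12}^{\dagger}=A_{12}^\top(A_{12}A_{12}^\top)^{-1}$ is the Moore–Penrose pseudo-inverse of the full-row-rank matrix $A_{12}$. (Equivalently, $R_\phi=Q^+A_{22}-LA_{12}$ with $L=(Q^+A_{22}-\phi\,Q^+A_{22}QQ^+)A_{12}^\dagger$.) A matrix is Hurwitz if all its eigenvalues have negative real part. *)

From HB Require Import structures.
From mathcomp Require Import all_boot all_order all_algebra.
From mathcomp Require Import complex.
From mathcomp Require Import reals.
Set Implicit Arguments. Unset Strict Implicit. Unset Printing Implicit Defensive.
Import Order.TTheory GRing.Theory Num.Theory.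
Local Open Scope ring_scope.
Local Open Scope complex_scope.

Definition clustering_matrix (R : realType) (n k : nat) (Q : 'M[R]_(n, k)) : Prop :=
  (forall i j, Q i j = 0 \/ Q i j = 1) /\
  (forall i, \sum_(j < k) Q i j = 1) /\
  (forall j, exists i, Q i j != 0).

Definition qplus (R : realType) (n k : nat) (Q : 'M[R]_(n, k)) : 'M[R]_(k, n) :=
  invmx (Q^T *m Q) *m Q^T.

Definition pinv_fullrow (R : realType) (m n : nat) (A : 'M[R]_(m, n)) : 'M[R]_(n, m) :=
  A^T *m invmx (A *m A^T).

Definition weak_adj (R : realType) (n : nat) (A : 'M[R]_n) : rel 'I_n :=
  fun i j => (i != j) && ((0 < A i j) || (0 < A j i)).

Definition weakly_connected (R : realType) (n : nat) (A : 'M[R]_n) : Prop :=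
  forall i j : 'I_n, connect (weak_adj A) i j.

Definition hurwitz (R : realType) (k : nat) (M : 'M[R]_k) : Prop :=
  forall z : R[i], eigenvalue (map_mx (fun x : R => x%:C) M) z -> Re z < 0.

Definition R_phi (R : realType) (m n k : nat) (A12 : 'M[R]_(m, n)) (A22 : 'M[R]_n)
  (Q : 'M[R]_(n, k)) (phi : R) : 'M[R]_(k, n) :=
  qplus Q *m A22 *m (1%:M - (1%:M - phi *: (Q *m qplus Q)) *m pinv_fullrow A12 *m A12).

Definition M_phi (R : realType) (m n k : nat) (A12 : 'M[R]_(m, n)) (A22 : 'M[R]_n)
  (Q : 'M[R]_(n, k)) (phi : R) : 'M[R]_k :=
  R_phi A12 A22 Q phi *m Q.

(* Proof idea: a Lyapunov argument.  Let P := A12^+ A12 (an orthogonal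
   projection), S := Q^T P Q and X := S^-1; the rank hypotheses make S a
   positive definite Gram matrix.  Since Q^+ P Q X = (Q^T Q)^-1, one gets
   M_phi X = C X + phi Q^+ A22 Q^+^T with C independent of phi, hence
   x (M_phi X) x^T = y (Q C X Q^T) y^T + phi y A22 y^T for y := x Q^+, and
   y = 0 only if x = 0.  The hypotheses on A22 make it negative definite:
   for B := A22 + A22^T one has 2 y B y^T = 2 sum_i (sum_j B_ij) y_i^2 -
   sum_ij B_ij (y_i - y_j)^2, the row sums of B are nonpositive and negative
   at j, and weak connectivity bounds |y|^2 by y_j^2 plus the Dirichlet
   energy sum_ij B_ij (y_i - y_j)^2.  So for phi large x (M_phi X) x^T < 0
   for x <> 0, and an eigenvector a + ib of M_phi with eigenvalue z gives
   Re z (a X a^T + b X b^T) < 0 with the bracket nonnegative. *)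

From HB Require Import structures.
From mathcomp Require Import all_boot all_order all_algebra.
From mathcomp Require Import complex reals.
From mathcomp Require Import ring lra.
Import Order.TTheory GRing.Theory Num.Theory.
Set Implicit Arguments. Unset Strict Implicit. Unset Printing Implicit Defensive.
Local Open Scope ring_scope.

Section QuadraticForms.
Variable R : realType.
Implicit Types p q : nat.

Definition bform p (X : 'M[R]_p) (a b : 'rV[R]_p) : R := (a *m X *m b^T) 0 0.
Definition qform p (X : 'M[R]_p) (a : 'rV[R]_p) : R := bform X a a.
Definition nrm2 p (a : 'rV[R]_p) : R := \sum_i a 0 i ^+ 2.

Lemma qformE p (X : 'M[R]_p) y :
  qform X y = \sum_i \sum_j y 0 i * X i j * y 0 j.
Proof.
rewrite /qform /bform mxE.
under eq_bigr => j _ do rewrite !mxE big_distrl /=.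
by rewrite exchange_big.
Qed.

Lemma nrm2E p (a : 'rV[R]_p) : nrm2 a = (a *m a^T) 0 0.
Proof. by rewrite mxE; apply: eq_bigr => i _; rewrite mxE expr2. Qed.

Lemma nrm2_ge0 p (a : 'rV[R]_p) : 0 <= nrm2 a.
Proof. by apply: sumr_ge0 => i _; rewrite sqr_ge0. Qed.

Lemma nrm2_eq0 p (a : 'rV[R]_p) : (nrm2 a == 0) = (a == 0).
Proof.
apply/eqP/eqP => [a0|->]; last by rewrite /nrm2 big1 // => i _; rewrite mxE expr0n.
apply/rowP => i; have /eqP := psumr_eq0P (fun i _ => sqr_ge0 (a 0 i)) a0 (i := i) isT.
by rewrite sqrf_eq0 mxE => /eqP.
Qed.

Lemma nrm2_gt0 p (a : 'rV[R]_p) : (0 < nrm2 a) = (a != 0).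
Proof. by rewrite lt_def nrm2_ge0 nrm2_eq0 andbT. Qed.

Lemma sqr_le_nrm2 p (a : 'rV[R]_p) i : a 0 i ^+ 2 <= nrm2 a.
Proof.
by rewrite /nrm2 (bigD1 i) //= lerDl; apply: sumr_ge0 => j _; rewrite sqr_ge0.
Qed.

Lemma bformDl p (X : 'M[R]_p) a b c : bform X (a + b) c = bform X a c + bform X b c.
Proof. by rewrite /bform !mulmxDl mxE. Qed.

Lemma bformZl p (X : 'M[R]_p) r a c : bform X (r *: a) c = r * bform X a c.
Proof. by rewrite /bform -!scalemxAl mxE. Qed.

Lemma bformNl p (X : 'M[R]_p) a c : bform X (- a) c = - bform X a c.
Proof. by rewrite -scaleN1r bformZl mulN1r. Qed.

Lemma bform_sym p (X : 'M[R]_p) a b : X^T = X -> bform X a b = bform X b a.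
Proof.
move=> X_sym; rewrite /bform; transitivity ((a *m X *m b^T)^T 0 0).
  by rewrite [RHS]mxE.
by rewrite !trmx_mul trmxK X_sym mulmxA.
Qed.

Lemma bform_mull p (M X : 'M[R]_p) a b : bform (M *m X) a b = bform X (a *m M) b.
Proof. by rewrite /bform mulmxA. Qed.

Lemma qformD p (X Y : 'M[R]_p) a : qform (X + Y) a = qform X a + qform Y a.
Proof. by rewrite /qform /bform mulmxDr mulmxDl mxE. Qed.

Lemma qformZ p (X : 'M[R]_p) r a : qform (r *: X) a = r * qform X a.
Proof. by rewrite /qform /bform -scalemxAr -scalemxAl mxE. Qed.

Lemma qform_tr p (X : 'M[R]_p) a : qform X^T a = qform X a.
Proof.
rewrite /qform /bform; transitivity ((a *m X^T *m a^T)^T 0 0).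
  by rewrite [RHS]mxE.
by rewrite !trmx_mul !trmxK mulmxA.
Qed.

Lemma qform_conj p q (T : 'M[R]_(p, q)) (Y : 'M[R]_q) a :
  qform (T *m Y *m T^T) a = qform Y (a *m T).
Proof. by rewrite /qform /bform trmx_mul !mulmxA. Qed.

Lemma qform_gram p q (T : 'M[R]_(p, q)) a : qform (T *m T^T) a = nrm2 (a *m T).
Proof.
by rewrite -{1}[T]mulmx1 qform_conj nrm2E /qform /bform mulmx1.
Qed.

Lemma qform_invmx p (S : 'M[R]_p) a : S^T = S -> S \in unitmx ->
  qform (invmx S) a = qform S (a *m invmx S).
Proof.
move=> S_sym S_unit; rewrite /qform /bform trmx_mul trmx_inv S_sym !mulmxA.
by rewrite -(mulmxA _ S) mulmxV // mulmx1.
Qed.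

Lemma qform_le_nrm2 p (Y : 'M[R]_p) :
  exists2 K, 0 <= K & forall y, qform Y y <= K * nrm2 y.
Proof.
exists (\sum_i \sum_j `|Y i j|) => [|y].
  by apply: sumr_ge0 => i _; apply: sumr_ge0.
rewrite qformE big_distrl /=; apply: ler_sum => i _.
rewrite big_distrl /=; apply: ler_sum => j _.
have yij : `|y 0 i * y 0 j| <= nrm2 y.
  have := sqr_le_nrm2 y i; have := sqr_le_nrm2 y j.
  have := sqr_ge0 (y 0 i - y 0 j); have := sqr_ge0 (y 0 i + y 0 j).
  by move=> *; rewrite ler_norml; apply/andP; split; nra.
rewrite mulrAC mulrC; apply: (le_trans (ler_norm _)).
by rewrite normrM; apply: ler_wpM2l.
Qed.

Lemma gram_unit p q (T : 'M[R]_(p, q)) : row_free T -> T *m T^T \in unitmx.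
Proof.
move=> T_free; rewrite -row_free_unit; apply: inj_row_free => z zT0.
apply/eqP; rewrite -(mulmx_free_eq0 _ T_free) -nrm2_eq0 -qform_gram.
by rewrite /qform /bform zT0 mul0mx mxE.
Qed.

Definition dirichlet p (B : 'M[R]_p) (y : 'rV[R]_p) : R :=
  \sum_i \sum_j B i j * (y 0 i - y 0 j) ^+ 2.

Lemma qform_laplacian p (B : 'M[R]_p) y : B^T = B ->
  2 * qform B y = 2 * \sum_i (\sum_j B i j) * y 0 i ^+ 2 - dirichlet B y.
Proof.
move=> B_sym.
have B_symE i j : B j i = B i j by rewrite -{1}B_sym mxE.
have swapE : \sum_i \sum_j B i j * y 0 j ^+ 2 = \sum_i (\sum_j B i j) * y 0 i ^+ 2.
  rewrite exchange_big /=; apply: eq_bigr => i _; rewrite big_distrl /=.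
  by apply: eq_bigr => j _; rewrite B_symE.
have rowE : \sum_i \sum_j B i j * y 0 i ^+ 2 = \sum_i (\sum_j B i j) * y 0 i ^+ 2.
  by apply: eq_bigr => i _; rewrite big_distrl.
suff -> : dirichlet B y = \sum_i (\sum_j B i j) * y 0 i ^+ 2
    + \sum_i (\sum_j B i j) * y 0 i ^+ 2 - 2 * qform B y by ring.
transitivity (\sum_i \sum_j
    (B i j * y 0 i ^+ 2 + B i j * y 0 j ^+ 2 - 2 * (y 0 i * B i j * y 0 j))).
  by apply: eq_bigr => i _; apply: eq_bigr => j _; ring.
under eq_bigr => i _ do rewrite sumrB big_split /= -mulr_sumr.
by rewrite sumrB big_split /= -mulr_sumr rowE swapE -qformE.
Qed.

Section ConnectedGraph.
Variables (p : nat) (B : 'M[R]_p).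
Hypothesis B_ge0 : forall i j, i != j -> 0 <= B i j.
Hypothesis B_connected : forall i j, connect [rel i j | 0 < B i j] i j.
Implicit Types y : 'rV[R]_p.

Lemma dirichlet_term_ge0 y i j : 0 <= B i j * (y 0 i - y 0 j) ^+ 2.
Proof.
have [->|ij] := eqVneq i j; first by rewrite subrr expr0n mulr0.
by rewrite mulr_ge0 ?sqr_ge0 ?B_ge0.
Qed.

Lemma dirichlet_ge0 y : 0 <= dirichlet B y.
Proof.
by apply: sumr_ge0 => i _; apply: sumr_ge0 => j _; apply: dirichlet_term_ge0.
Qed.

Lemma dirichlet_term_le y i j : B i j * (y 0 i - y 0 j) ^+ 2 <= dirichlet B y.
Proof.
rewrite /dirichlet (bigD1 i) //= (bigD1 j) //= -addrA lerDl.
rewrite addr_ge0 //; first by apply: sumr_ge0 => l _; apply: dirichlet_term_ge0.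
by apply: sumr_ge0 => l _; apply: sumr_ge0 => l' _; apply: dirichlet_term_ge0.
Qed.

Lemma sqr_le_dirichlet_edge j0 x w al : 0 < B x w -> 0 <= al ->
  (forall y, y 0 x ^+ 2 <= al * (y 0 j0 ^+ 2 + dirichlet B y)) ->
  forall y, y 0 w ^+ 2 <= (2 * al + 2 / B x w) * (y 0 j0 ^+ 2 + dirichlet B y).
Proof.
move=> Bxw al_ge0 bound_x y; set G := _ + dirichlet B y.
have G_ge0 : 0 <= G by rewrite addr_ge0 ?sqr_ge0 ?dirichlet_ge0.
have diff_le : (y 0 x - y 0 w) ^+ 2 <= G / B x w.
  rewrite ler_pdivlMr // mulrC; apply: le_trans (dirichlet_term_le y x w) _.
  by rewrite lerDr sqr_ge0.
have := bound_x y; have := sqr_ge0 (y 0 x + y 0 x - y 0 w).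
rewrite mulrDl mulrAC -!mulrA -/G; nra.
Qed.

Lemma sqr_le_dirichlet j0 i : exists2 al, 0 <= al &
  forall y, y 0 i ^+ 2 <= al * (y 0 j0 ^+ 2 + dirichlet B y).
Proof.
set bounded := fun x => exists2 al, 0 <= al &
  forall y, y 0 x ^+ 2 <= al * (y 0 j0 ^+ 2 + dirichlet B y).
have bounded_last s x :
    path [rel i j | 0 < B i j] x s -> bounded x -> bounded (last x s).
  elim: s x => [|w s IHs] x /=; first by move=> _.
  move=> /andP[Bxw path_ws] [al al_ge0 bound_x].
  apply: IHs path_ws _; exists (2 * al + 2 / B x w); last exact: sqr_le_dirichlet_edge.
  by rewrite addr_ge0 ?mulr_ge0 ?invr_ge0 // ltW.
have /connectP [s j0_s ->] := B_connected j0 i.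
by apply: bounded_last j0_s _; exists 1 => // y; rewrite mul1r lerDl dirichlet_ge0.
Qed.

Lemma nrm2_le_dirichlet j0 : exists2 c, 0 < c &
  forall y, c * nrm2 y <= y 0 j0 ^+ 2 + dirichlet B y.
Proof.
have [al al_ge0 bound] := fin_all_exists2 (sqr_le_dirichlet j0).
have sum_ge0 : 0 <= \sum_i al i by apply: sumr_ge0.
exists (1 / (\sum_i al i + 1)) => [|y]; first by rewrite divr_gt0 // ltr_wpDl.
rewrite mul1r ler_pdivrMl ?ltr_wpDl // mulrDl mul1r.
have G_ge0 : 0 <= y 0 j0 ^+ 2 + dirichlet B y by rewrite addr_ge0 ?sqr_ge0 ?dirichlet_ge0.
rewrite -[X in X <= _]addr0 lerD //.
by rewrite /nrm2 mulr_suml; apply: ler_sum => i _; apply: bound.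
Qed.

End ConnectedGraph.

Section DominantConnected.
Variables (p : nat) (A : 'M[R]_p).
Hypothesis A_offdiag_ge0 : forall i j, i != j -> 0 <= A i j.
Hypothesis A_diag_le0 : forall i, A i i <= 0.
Hypothesis A_connected : weakly_connected A.
Hypothesis A_dominant :
  forall i, \sum_(j < p | j != i) (A i j + A j i) <= 2 * `|A i i|.
Variable j0 : 'I_p.
Hypothesis A_strict :
  \sum_(l < p | l != j0) (A j0 l + A l j0) < 2 * `|A j0 j0|.

Let B := A + A^T.

Lemma symmetrize_rowsumE i :
  \sum_j B i j = \sum_(j | j != i) (A i j + A j i) - 2 * `|A i i|.
Proof.
rewrite (bigD1 i) //= ler0_norm // mulrN opprK addrC.
by congr (_ + _); [apply: eq_bigr => j _|]; rewrite !mxE // mulr2n mulrDl mul1r.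
Qed.

Lemma qform_dominant_connected_neg :
  exists2 c, 0 < c & forall y, qform A y <= - c * nrm2 y.
Proof.
have B_ge0 i j : i != j -> 0 <= B i j.
  by move=> ij; rewrite !mxE addr_ge0 ?A_offdiag_ge0 // eq_sym.
have B_connected i j : connect [rel i j | 0 < B i j] i j.
  apply: connect_sub (A_connected i j) => {}i {}j /andP[ij Aij].
  apply: connect1; rewrite /= !mxE.
  have := A_offdiag_ge0 ij; rewrite eq_sym in ij; have := A_offdiag_ge0 ij.
  by case/orP: Aij; lra.
have [c c_gt0 poincare] := nrm2_le_dirichlet B_ge0 B_connected j0.
set tau := 2 * `|A j0 j0| - \sum_(l | l != j0) (A j0 l + A l j0).
have tau_gt0 : 0 < tau by rewrite subr_gt0.
set mu := Num.min tau (1 / 2).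
have mu_gt0 : 0 < mu by rewrite lt_min tau_gt0 /=; lra.
have /andP[mu_le_tau mu_le_half] : (mu <= tau) && (mu <= 1 / 2) by rewrite -le_min lexx.
exists (mu * c / 2) => [|y]; first by rewrite !divr_gt0 ?mulr_gt0.
have qformB : 2 * qform A y = qform B y by rewrite qformD qform_tr; ring.
have rowsum_le : \sum_i (\sum_j B i j) * y 0 i ^+ 2 <= - tau * y 0 j0 ^+ 2.
  rewrite (bigD1 j0) //= symmetrize_rowsumE -[X in _ <= X]addr0 lerD //.
  - by rewrite /tau opprB.
  apply: sumr_le0 => i _; rewrite mulr_le0_ge0 ?sqr_ge0 //.
  by rewrite symmetrize_rowsumE subr_le0.
have B_sym : B^T = B by rewrite /B raddfD /= trmxK addrC.
have := qform_laplacian y B_sym.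
have := poincare y; have := dirichlet_ge0 B_ge0 y; have := sqr_ge0 (y 0 j0).
rewrite -qformB; nra.
Qed.

End DominantConnected.

Local Notation Re := (@complex.Re R).
Local Notation Im := (@complex.Im R).

Lemma Re_Im_eigenvector p (M : 'M[R]_p) (z : R[i]) (v : 'rV[R[i]]_p) :
  v *m map_mx (fun x => x%:C%C) M = z *: v ->
  map_mx Re v *m M = Re z *: map_mx Re v - Im z *: map_mx Im v /\
  map_mx Im v *m M = Im z *: map_mx Re v + Re z *: map_mx Im v.
Proof.
move=> /rowP eigen; split; apply/rowP => j.
- transitivity (Re ((v *m map_mx (fun x => x%:C%C) M) 0 j)).
    rewrite !mxE (raddf_sum (Re : Rcomplex R -> R)); apply: eq_bigr => i _.
    by rewrite !mxE; case: (v 0 i) => ? ? /=; rewrite mulr0 subr0.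
  by rewrite eigen !mxE; case: (z) (v 0 j) => ? ? [? ?].
- transitivity (Im ((v *m map_mx (fun x => x%:C%C) M) 0 j)).
    rewrite !mxE (raddf_sum (Im : Rcomplex R -> R)); apply: eq_bigr => i _.
    by rewrite !mxE; case: (v 0 i) => ? ? /=; rewrite mulr0 add0r.
  by rewrite eigen !mxE; case: (z) (v 0 j) => ? ? [? ?] /=; rewrite addrC.
Qed.

(* MathComp eigenvectors are row vectors, whence the form x (M X) x^T. *)
Lemma lyapunov_hurwitz p (M X : 'M[R]_p) :
  X^T = X -> (forall x, 0 <= qform X x) ->
  (forall x, x != 0 -> qform (M *m X) x < 0) -> hurwitz M.
Proof.
move=> X_sym X_psd MX_neg z /eigenvalueP [v /Re_Im_eigenvector [Ma Mb] v_neq0].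
set a := map_mx Re v in Ma Mb; set b := map_mx Im v in Ma Mb.
have MX_le0 x : qform (M *m X) x <= 0.
  by have [->|/MX_neg/ltW //] := eqVneq x 0; rewrite /qform /bform !mul0mx mxE.
have sumE : qform (M *m X) a + qform (M *m X) b = Re z * (qform X a + qform X b).
  rewrite /qform !bform_mull Ma Mb !(bformDl, bformNl, bformZl).
  by rewrite (bform_sym _ _ X_sym); ring.
have sum_lt0 : qform (M *m X) a + qform (M *m X) b < 0.
  have := MX_le0 a; have := MX_le0 b.
  have [a0|/MX_neg] := eqVneq a 0; last lra.
  have [b0|/MX_neg] := eqVneq b 0; last lra.
  case/eqP: v_neq0; apply/rowP => j; move/rowP/(_ j): a0; move/rowP/(_ j): b0.
  by rewrite !mxE; case: (v 0 j) => ? ? /= -> ->.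
have := X_psd a; have := X_psd b; rewrite -complexRe ltcE /= eqxx /=.
rewrite sumE in sum_lt0; nra.
Qed.

Section ReducedModel.
Variables (m n k : nat) (A : 'M[R]_(m, n)) (A22 : 'M[R]_n) (Q : 'M[R]_(n, k)).
Hypothesis A_row_free : row_free A.
Hypothesis AQ_rank : \rank (A *m Q) = k.

Let P := pinv_fullrow A *m A.
Let Qp := qplus Q.
Let D := Q^T *m Q.
Let S := Q^T *m P *m Q.
Let X := invmx S.

Lemma mulmx_pinv_fullrow : A *m pinv_fullrow A = 1%:M.
Proof. by rewrite /pinv_fullrow mulmxA mulmxV // gram_unit. Qed.

Lemma P_sym : P^T = P.
Proof.
by rewrite /P /pinv_fullrow !trmx_mul trmx_inv trmx_mul trmxK mulmxA.
Qed.

Lemma P_idem : P *m P = P.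
Proof. by rewrite /P mulmxA -(mulmxA _ A) mulmx_pinv_fullrow mulmx1. Qed.

Lemma Q_tr_row_free : row_free Q^T.
Proof.
by rewrite /row_free mxrank_tr eqn_leq rank_leq_col -{1}AQ_rank mxrankM_maxr.
Qed.

Lemma PQ_tr_row_free : row_free (P *m Q)^T.
Proof.
have APQ : A *m (P *m Q) = A *m Q.
  by rewrite /P mulmxA [A *m (_ *m A)]mulmxA mulmx_pinv_fullrow mul1mx.
by rewrite /row_free mxrank_tr eqn_leq rank_leq_col -{1}AQ_rank -APQ mxrankM_maxr.
Qed.

Lemma D_unit : D \in unitmx.
Proof. by rewrite /D -[X in _ *m X](trmxK Q) gram_unit // Q_tr_row_free. Qed.

Lemma S_gram : S = (P *m Q)^T *m (P *m Q).
Proof. by rewrite /S trmx_mul P_sym mulmxA -(mulmxA _ P P) P_idem. Qed.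

Lemma S_unit : S \in unitmx.
Proof.
by rewrite S_gram -[X in _ *m X](trmxK (P *m Q)) gram_unit // PQ_tr_row_free.
Qed.

Lemma S_sym : S^T = S.
Proof. by rewrite S_gram trmx_mul trmxK. Qed.

Lemma X_sym : X^T = X.
Proof. by rewrite /X trmx_inv S_sym. Qed.

Lemma qform_X_ge0 x : 0 <= qform X x.
Proof.
rewrite /X (qform_invmx _ S_sym S_unit) S_gram.
by rewrite -[X in _ *m X](trmxK (P *m Q)) qform_gram nrm2_ge0.
Qed.

Lemma qplusK : Qp *m Q = 1%:M.
Proof. by rewrite /Qp /qplus -mulmxA mulVmx // D_unit. Qed.

Lemma qplus_tr : Qp^T = Q *m invmx D.
Proof. by rewrite /Qp /qplus trmx_mul trmxK trmx_inv /D trmx_mul trmxK. Qed.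

Let C := Qp *m A22 *m (1%:M - P) *m Q.

Lemma M_phiE phi :
  M_phi A A22 Q phi = C + phi *: (Qp *m A22 *m Q *m (Qp *m P *m Q)).
Proof.
have splitE :
    1%:M - (1%:M - phi *: (Q *m Qp)) *m P = 1%:M - P + phi *: (Q *m Qp *m P).
  by rewrite mulmxBl mul1mx -scalemxAl opprB addrCA addrC.
rewrite /M_phi /R_phi -/Qp -(mulmxA _ (pinv_fullrow A)) -/P splitE.
by rewrite mulmxDr mulmxDl -!scalemxAr -scalemxAl !mulmxA.
Qed.

Lemma M_phi_mulX phi :
  M_phi A A22 Q phi *m X = C *m X + phi *: (Qp *m A22 *m Qp^T).
Proof.
have QpPQX : Qp *m P *m Q *m X = invmx D.
  have -> : Qp *m P *m Q = invmx D *m S by rewrite /S !mulmxA.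
  by rewrite -mulmxA mulmxV ?mulmx1 ?S_unit.
by rewrite M_phiE mulmxDl -scalemxAl -mulmxA QpPQX -mulmxA -qplus_tr.
Qed.

Lemma qform_M_phi_mulX phi x : qform (M_phi A A22 Q phi *m X) x =
  qform (Q *m (C *m X) *m Q^T) (x *m Qp) + phi * qform A22 (x *m Qp).
Proof. by rewrite M_phi_mulX qformD qformZ !qform_conj -mulmxA qplusK mulmx1. Qed.

Lemma M_phi_hurwitz_eventually c : 0 < c ->
    (forall y, qform A22 y <= - c * nrm2 y) ->
  exists psi, forall phi, psi < phi -> hurwitz (M_phi A A22 Q phi).
Proof.
move=> c_gt0 A22_neg.
have [K K_ge0 K_bound] := qform_le_nrm2 (Q *m (C *m X) *m Q^T).
exists (K / c) => phi phi_gt; apply: lyapunov_hurwitz X_sym qform_X_ge0 _ => x x_neq0.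
have y_gt0 : 0 < nrm2 (x *m Qp).
  rewrite nrm2_gt0; apply: contraNneq x_neq0 => xQp0.
  by rewrite -[x]mulmx1 -qplusK mulmxA xQp0 mul0mx.
have K_lt : K < phi * c by rewrite -ltr_pdivrMr.
have phi_ge0 : 0 <= phi by have := divr_ge0 K_ge0 (ltW c_gt0); lra.
rewrite qform_M_phi_mulX.
have := K_bound (x *m Qp); have := ler_wpM2l phi_ge0 (A22_neg (x *m Qp)).
have : 0 < (phi * c - K) * nrm2 (x *m Qp) by rewrite mulr_gt0 ?subr_gt0.
nra.
Qed.

End ReducedModel.

End QuadraticForms.

Theorem theorem4 (R : realType) (m n k : nat)
  (A12 : 'M[R]_(m, n)) (A22 : 'M[R]_n) (Q : 'M[R]_(n, k)) :
  (forall i j, 0 <= A12 i j) ->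
  \rank A12 = m ->
  (forall i j, i != j -> 0 <= A22 i j) ->
  (forall i, A22 i i <= 0) ->
  weakly_connected A22 ->
  (forall i, \sum_(j < n | j != i) (A22 i j + A22 j i) <= 2 * `|A22 i i|) ->
  (exists j, \sum_(l < n | l != j) (A22 j l + A22 l j) < 2 * `|A22 j j|) ->
  clustering_matrix Q ->
  \rank (A12 *m Q) = k ->
  exists psi : R, forall phi : R, psi < phi -> hurwitz (M_phi A12 A22 Q phi).
Proof.
move=> _ A12_rank A22_offdiag A22_diag A22_conn A22_dom [j0 A22_strict] _ AQ_rank.
have A12_row_free : row_free A12 by rewrite /row_free A12_rank.
have [c c_gt0 A22_neg] :=
  qform_dominant_connected_neg A22_offdiag A22_diag A22_conn A22_dom A22_strict.
exact: (M_phi_hurwitz_eventually A12_row_free AQ_rank c_gt0 A22_neg).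
Qed.
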